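(* Suppose Assumption A holds and $F$ is $K$-convex. Let $\{x^k\}$ be an infinite sequence generated by Algorithm 1 with $G_k\in\mathcal{S}_{\ell,\mu}(F,x^k)$ for all $k$, where $\ell\preceq_K\mu$. Then: (i) $\{x^k\}$ converges to a weakly efficient solution $x^*$ of $\min_K F(x)$; (ii) $u_0(x^k)\le\frac{\ell_{\max}R^2}{2k}$ for all $k\ge1$, where $\ell_{\max}:=\max_{c^*\in C}\langle c^*,\ell\rangle$, $R:=\sup\{\|x-y\|:x,y\in\mathcal{L}_F(x^0)\}$, and $u_0(x):=\max_{z\in\mathbb{R}^n}\min_{c^*\in C}\langle c^*,F(x)-F(z)\rangle$.
   Context: $K\subset\mathbb{R}^m$ is a closed, convex, pointed cone with nonempty interior; $y\preceq_K y'$ iff $y'-y\in K$, $y\prec_K y'$ iff $y'-y\in\mathrm{int}(K)$. $K^*=\{c:\langle c,y\rangle\ge0\ \forall y\in K\}$; $C$ is a compact convex set with $0\notin C$, $\mathrm{cone}(C)=K^*$. $F:\mathbb{R}^n\to\mathbb{R}^m$ differentiable with Jacobian $JF$. $K$-convex: $JF(x)(y-x)\preceq_K F(y)-F(x)$ for all $x,y$. $x^*$ is weakly efficient if there is no $x$ with $F(x)\prec_K F(x^* )$; $K$-stationary if $\mathrm{range}(JF(x^* ))\cap(-\mathrm{int}(K))=\emptyset$. For differentiable $\Phi$: strongly $K$-convex with $\mu\in K$ means $J\Phi(x)(y-x)+\tfrac12\|y-x\|^2\mu\preceq_K\Phi(y)-\Phi(x)$ $\forall x,y$; $K$-smooth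 with $\ell\in K$ means $\Phi(y)-\Phi(x)\preceq_K J\Phi(x)(y-x)+\tfrac12\|y-x\|^2\ell$ $\forall x,y$. Surrogate class $\mathcal{S}_{\ell,\mu}(F,x^k)$ ($\ell\in K,\mu\in\mathrm{int}(K)$): differentiable $G_k$ strongly $K$-convex with $\mu$ such that, with $x^{k+1}$ the minimizer of $x\mapsto\max_{c^*\in C}\langle c^*,G_k(x)\rangle$ and $H_k:=G_k-F+F(x^k)$: $F(x^{k+1})-F(x^k)\preceq_K G_k(x^{k+1})$; $H_k$ is $K$-smooth with $\ell$, $H_k(x^k)=0$, $JH_k(x^k)=0$. Algorithm 1: from $x^0$, choose $G_k\in\mathcal{S}_{\ell,\mu}(F,x^k)$, set $x^{k+1}:=\arg\min_x\max_{c^*\in C}\langle c^*,G_k(x)\rangle$, stop if $x^{k+1}=x^k$. Assumption A: (i) $\mathcal{L}_F(x^0)=\{x:F(x)\preceq_K F(x^0)\}$ is bounded; (ii) whenever $x^k\to x^*$ along an infinite index set $\mathcal{K}$, $G_k\in\mathcal{S}_{\ell,\mu}(F,x^k)$ and $\max_{c^*\in C}\langle c^*,G_k(x^{k+1})\rangle\to0$ along $\mathcal{K}$, $x^*$ is $K$-stationary. *)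

From HB Require Import structures.
From mathcomp Require Import all_boot all_order all_algebra.
From mathcomp Require Import all_classical all_reals all_analysis.
Set Implicit Arguments. Unset Strict Implicit. Unset Printing Implicit Defensive.
Import Order.TTheory GRing.Theory Num.Theory.
Import numFieldNormedType.Exports.
Local Open Scope classical_set_scope.
Local Open Scope ring_scope.

Section Defs.
Variable R : realType.

Definition dotv (p : nat) (u v : 'rV[R]_p) : R := \sum_(i < p) u ord0 i * v ord0 i.
Definition enorm (p : nat) (v : 'rV[R]_p) : R := Num.sqrt (dotv v v).

Definition convexS (p : nat) (A : set 'rV[R]_p) :=
  forall x y (t : R), A x -> A y -> 0 <= t -> t <= 1 -> A (t *: x + (1 - t) *: y).

Definition proper_cone (m : nat) (K : set 'rV[R]_m) :=
  closed K /\ K 0 /\ (forall y (t : R), K y -> 0 <= t -> K (t *: y)) /\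
  (forall y z, K y -> K z -> K (y + z)) /\
  (forall y, K y -> K (- y) -> y = 0) /\ (interior K !=set0).

Definition leK (m : nat) (K : set 'rV[R]_m) (y y' : 'rV[R]_m) := K (y' - y).
Definition ltK (m : nat) (K : set 'rV[R]_m) (y y' : 'rV[R]_m) := interior K (y' - y).

Definition dual_cone (m : nat) (K : set 'rV[R]_m) : set 'rV[R]_m :=
  [set c | forall y, K y -> 0 <= dotv c y].

Definition cone_of (m : nat) (C : set 'rV[R]_m) : set 'rV[R]_m :=
  [set y | exists t, 0 <= t /\ exists2 c, C c & y = t *: c].

(* max_{c in C} <c, y>  (C compact, so the sup is attained) *)
Definition phiC (m : nat) (C : set 'rV[R]_m) (y : 'rV[R]_m) : R :=
  sup [set dotv c y | c in C].

Definition K_convex (n m : nat) (K : set 'rV[R]_m) (F : 'rV[R]_n -> 'rV[R]_m) :=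
  forall x y, leK K ('d F x (y - x)) (F y - F x).

Definition strongly_K_convex (n m : nat) (K : set 'rV[R]_m)
    (Phi : 'rV[R]_n -> 'rV[R]_m) (mu : 'rV[R]_m) :=
  forall x y, leK K ('d Phi x (y - x) + (2^-1 * enorm (y - x) ^+ 2) *: mu)
                    (Phi y - Phi x).

Definition K_smooth (n m : nat) (K : set 'rV[R]_m)
    (Phi : 'rV[R]_n -> 'rV[R]_m) (l : 'rV[R]_m) :=
  forall x y, leK K (Phi y - Phi x)
                    ('d Phi x (y - x) + (2^-1 * enorm (y - x) ^+ 2) *: l).

Definition is_argmin_phi (n m : nat) (C : set 'rV[R]_m)
    (G : 'rV[R]_n -> 'rV[R]_m) (z : 'rV[R]_n) :=
  forall x, phiC C (G z) <= phiC C (G x).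

Definition surrogate (n m : nat) (K : set 'rV[R]_m) (C : set 'rV[R]_m)
    (l mu : 'rV[R]_m) (F : 'rV[R]_n -> 'rV[R]_m) (xk : 'rV[R]_n)
    (G : 'rV[R]_n -> 'rV[R]_m) :=
  let H := fun z => G z - F z + F xk in
  (forall x, differentiable G x) /\
  strongly_K_convex K G mu /\
  (forall xnext, is_argmin_phi C G xnext ->
                 leK K (F xnext - F xk) (G xnext)) /\
  K_smooth K H l /\
  H xk = 0 /\
  (forall v, 'd H xk v = 0).

Definition level_set (n m : nat) (K : set 'rV[R]_m) (F : 'rV[R]_n -> 'rV[R]_m)
    (x0 : 'rV[R]_n) : set 'rV[R]_n := [set x | leK K (F x) (F x0)].

Definition ebounded (n : nat) (A : set 'rV[R]_n) :=
  exists M : R, forall x, A x -> enorm x <= M.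

Definition cvg_along (n : nat) (x : nat -> 'rV[R]_n) (I : set nat) (xs : 'rV[R]_n) :=
  forall e : R, 0 < e -> exists N, forall k, I k -> (N <= k)%N -> enorm (x k - xs) < e.

Definition cvg_along_R (u : nat -> R) (I : set nat) (a : R) :=
  forall e : R, 0 < e -> exists N, forall k, I k -> (N <= k)%N -> `|u k - a| < e.

Definition K_stationary (n m : nat) (K : set 'rV[R]_m) (F : 'rV[R]_n -> 'rV[R]_m)
    (xs : 'rV[R]_n) :=
  forall d, ~ interior K (- 'd F xs d).

Definition weakly_efficient (n m : nat) (K : set 'rV[R]_m) (F : 'rV[R]_n -> 'rV[R]_m)
    (xs : 'rV[R]_n) :=
  ~ exists x, ltK K (F x) (F xs).

Definition assumptionA (n m : nat) (K C : set 'rV[R]_m) (l mu : 'rV[R]_m)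
    (F : 'rV[R]_n -> 'rV[R]_m) (x0 : 'rV[R]_n) :=
  ebounded (level_set K F x0) /\
  (forall (x : nat -> 'rV[R]_n) (G : nat -> 'rV[R]_n -> 'rV[R]_m)
          (I : set nat) (xs : 'rV[R]_n),
      (forall k, surrogate K C l mu F (x k) (G k)) ->
      (forall k, is_argmin_phi C (G k) (x k.+1)) ->
      infinite_set I ->
      cvg_along x I xs ->
      cvg_along_R (fun k => phiC C (G k (x k.+1))) I 0 ->
      K_stationary K F xs).

Definition diam_level (n m : nat) (K : set 'rV[R]_m) (F : 'rV[R]_n -> 'rV[R]_m)
    (x0 : 'rV[R]_n) : R :=
  sup [set enorm (x - y) | x in level_set K F x0 & y in level_set K F x0].

Definition u0 (n m : nat) (C : set 'rV[R]_m) (F : 'rV[R]_n -> 'rV[R]_m)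
    (x : 'rV[R]_n) : \bar R :=
  ereal_sup [set (inf [set dotv c (F x - F z) | c in C])%:E | z in [set: 'rV[R]_n]].

End Defs.

(* Each step decreases F along the order: <c, F x(k+1)> <= <c, F x(k)> for
   c in C, since G_k x(k) = 0.  For z with <c, F x(k+1) - F z> >= s >= 0 for all
   c in C, optimality of x(k+1) for the strongly K-convex G_k, K-smoothness of
   H_k and l <= mu give the Fejer inequality |z - x(k+1)| <= |z - x(k)| together
   with s <= (|z - x(k)|^2 - |z - x(k+1)|^2) max_C <c, l> / 2.  Telescoping over
   k steps yields the O(1/k) bound on u0.  The iterates stay in the bounded level
   set, so they have a cluster point, which is K-stationary by Assumption A (ii)
   and hence weakly efficient by K-convexity; Fejer monotonicity with respect to
   it makes the whole sequence converge. *)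

From HB Require Import structures.
From mathcomp Require Import all_boot all_order all_algebra.
From mathcomp Require Import all_classical all_reals all_analysis.
From mathcomp Require Import ring lra.
Import Order.TTheory GRing.Theory Num.Theory.
Import numFieldNormedType.Exports.
Local Open Scope classical_set_scope.
Local Open Scope ring_scope.

Set Implicit Arguments. Unset Strict Implicit. Unset Printing Implicit Defensive.

Lemma le0_small_mul (R : realFieldType) (a b : R) :
  (forall t : R, 0 < t -> t <= 1 -> a <= t * b) -> a <= 0.
Proof.
move=> H; rewrite leNgt; apply/negP => a0.
have b0 : 0 < b by have := H 1 ltr01 (lexx _); rewrite mul1r => /(lt_le_trans a0).
have t0 : 0 < a / (b + a) by rewrite divr_gt0 // addr_gt0.
have t1 : a / (b + a) <= 1 by rewrite ler_pdivrMr ?addr_gt0 // mul1r lerDr ltW.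
have := H _ t0 t1; rewrite mulrAC ler_pdivlMr ?addr_gt0 //.
nra.
Qed.

Section InnerProduct.
Variables (R : realType) (p : nat).
Implicit Types (u v w : 'rV[R]_p).

Lemma dotvC u v : dotv u v = dotv v u.
Proof. by apply: eq_bigr => i _; rewrite mulrC. Qed.

Lemma dotvDr u v w : dotv u (v + w) = dotv u v + dotv u w.
Proof. by rewrite /dotv -big_split; apply: eq_bigr => i _; rewrite !mxE mulrDr. Qed.

Lemma dotvZr u v (t : R) : dotv u (t *: v) = t * dotv u v.
Proof. by rewrite /dotv mulr_sumr; apply: eq_bigr => i _; rewrite !mxE mulrCA. Qed.

Lemma dotvNr u v : dotv u (- v) = - dotv u v.
Proof. by rewrite -scaleN1r dotvZr mulN1r. Qed.

Lemma dotvBr u v w : dotv u (v - w) = dotv u v - dotv u w.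
Proof. by rewrite dotvDr dotvNr. Qed.

Lemma dotv0r u : dotv u 0 = 0.
Proof. by rewrite /dotv big1 // => i _; rewrite mxE mulr0. Qed.

Lemma dotvDl u v w : dotv (v + w) u = dotv v u + dotv w u.
Proof. by rewrite dotvC dotvDr !(dotvC u). Qed.

Lemma dotvZl u v (t : R) : dotv (t *: v) u = t * dotv v u.
Proof. by rewrite dotvC dotvZr dotvC. Qed.

Lemma dotvNl u v : dotv (- v) u = - dotv v u.
Proof. by rewrite dotvC dotvNr dotvC. Qed.

Lemma dotvv_ge0 v : 0 <= dotv v v.
Proof. by apply: sumr_ge0 => i _; rewrite -expr2 sqr_ge0. Qed.

Lemma dotvv_eq0 v : dotv v v = 0 -> v = 0.
Proof.
move=> /eqP; rewrite psumr_eq0; last by move=> i _; rewrite -expr2 sqr_ge0.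
move=> /allP v0; apply/rowP => i; rewrite mxE.
by have /implyP/(_ isT) := v0 i (mem_index_enum i); rewrite -expr2 sqrf_eq0 => /eqP.
Qed.

Lemma dotvv_addZ u v (t : R) :
  dotv (u + t *: v) (u + t *: v) = dotv u u + 2 * t * dotv u v + t ^+ 2 * dotv v v.
Proof. by rewrite !dotvDr !dotvDl !dotvZr !dotvZl (dotvC v u); ring. Qed.

Lemma sqr_enorm v : enorm v ^+ 2 = dotv v v.
Proof. by rewrite /enorm sqr_sqrtr // dotvv_ge0. Qed.

Lemma enorm_ge0 v : 0 <= enorm v.
Proof. exact: sqrtr_ge0. Qed.

Lemma enormN v : enorm (- v) = enorm v.
Proof. by rewrite /enorm dotvNl dotvNr opprK. Qed.

Lemma sqr_enormZ v (t : R) : enorm (t *: v) ^+ 2 = t ^+ 2 * enorm v ^+ 2.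
Proof. by rewrite !sqr_enorm dotvZl dotvZr mulrA expr2. Qed.

Lemma coord_le_enorm v i : `|v ord0 i| <= enorm v.
Proof.
rewrite -(sqrtr_sqr (v ord0 i)) /enorm ler_sqrt; last exact: dotvv_ge0.
rewrite /dotv (bigD1 i) //= -expr2 lerDl.
by apply: sumr_ge0 => j _; rewrite -expr2 sqr_ge0.
Qed.

Lemma coord_le_norm v i : `|v ord0 i| <= `|v|.
Proof.
change (`|v ord0 i| <= mx_norm v); rewrite mx_normrE.
by apply/bigmax_geP; right; exists (ord0, i).
Qed.

Lemma norm_le_enorm v : `|v| <= enorm v.
Proof.
change (mx_norm v <= enorm v); rewrite mx_normrE; apply/bigmax_leP; split => /=.
  exact: enorm_ge0.
by move=> [i j] _ /=; rewrite (ord1 i); exact: coord_le_enorm.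
Qed.

Lemma enorm_le_norm v : enorm v <= p%:R * `|v|.
Proof.
have h : dotv v v <= (p%:R * `|v|) ^+ 2.
  apply: (@le_trans _ _ (\sum_(i < p) `|v| ^+ 2)).
    apply: ler_sum => i _; rewrite -expr2 -real_normK ?num_real //.
    by rewrite lerXn2r ?nnegrE // coord_le_norm.
  rewrite sumr_const card_ord exprMn -[leLHS]mulr_natl ler_wpM2r ?sqr_ge0 //.
  case: (p) => [|q]; first by rewrite expr0n.
  by rewrite expr2 ler_peMl // ler1n.
rewrite /enorm -(@ger0_norm _ (p%:R * `|v|)) ?mulr_ge0 //.
by rewrite -sqrtr_sqr ler_sqrt ?sqr_ge0.
Qed.

Lemma continuous_dotv u : continuous (dotv u).
Proof.
rewrite /dotv; apply: continuous_big => [z|i _ v].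
  by apply: cvgD; [exact: cvg_fst | exact: cvg_snd].
exact: (cvgMl_tmp (a:=u ord0 i) (@coord_continuous R 1 p ord0 i v)).
Qed.

Lemma continuous_dotvv : continuous (fun v => dotv v v).
Proof.
rewrite /dotv => v; apply: continuous_big => [z|i _ w].
  by apply: cvgD; [exact: cvg_fst | exact: cvg_snd].
exact: cvgM (@coord_continuous R 1 p ord0 i w) (@coord_continuous R 1 p ord0 i w).
Qed.

Lemma nearest_point (A : set 'rV[R]_p) y a0 : closed A -> A a0 ->
  exists2 q, A q & forall w, A w -> dotv (y - q) (y - q) <= dotv (y - w) (y - w).
Proof.
move=> clA Aa0; set r := enorm (y - a0) + 1.
have r0 : 0 < r by rewrite ltr_pwDr ?enorm_ge0.
have in_ball w : `|y - w| <= r -> closed_ball y r w.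
  by rewrite closed_ballE.
have Ba0 : closed_ball y r a0.
  by apply: in_ball; apply: le_trans (norm_le_enorm _) _; rewrite lerDl.
have cAB : compact (A `&` closed_ball y r).
  apply: bounded_closed_compact; last by apply: closedI => //; exact: closed_ball_closed.
  exists (`|y| + r); split; first exact: num_real.
  move=> M hM z [_]; rewrite closed_ballE // /closed_ball_ /= => hz.
  apply: ltW; apply: le_lt_trans hM.
  rewrite (_ : z = y - (y - z)); last by rewrite opprB addrC subrK.
  by apply: le_trans (ler_normB _ _) _; rewrite lerD2l.
have dcont : continuous (fun w => dotv (y - w) (y - w)).
  move=> w; apply: (@continuous_comp _ _ _ (fun w => y - w) (fun v => dotv v v)).
    by apply: (@continuousB R _ _ (cst y) id); [exact: cst_continuous | exact: cvg_id].
  exact: continuous_dotvv.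
have [|q] := @EVT_min_rV R p (fun w => dotv (y - w) (y - w)) _ (ex_intro _ a0 (conj Aa0 Ba0)) cAB.
  exact: continuous_subspaceT.
rewrite inE => -[Aq _] qmin.
exists q => // w Aw; have [wB|wB] := pselect (closed_ball y r w).
  by apply: qmin; rewrite inE.
apply: le_trans (qmin a0 _) _; first by rewrite inE.
rewrite -!sqr_enorm lerXn2r ?nnegrE ?enorm_ge0 //.
move: wB; rewrite closed_ballE // /closed_ball_ /= => /negP; rewrite -ltNge => rw.
by apply: le_trans (norm_le_enorm _); apply: ltW; apply: le_lt_trans rw; rewrite lerDl.
Qed.

Lemma cvg_enormP (u : nat -> 'rV[R]_p) (q : 'rV[R]_p) :
  u @ \oo --> q <-> (fun k => enorm (q - u k)) @ \oo --> 0.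
Proof.
split => /cvgrPdist_lt uq; apply/cvgrPdist_lt => e e0.
  have e1 : 0 < e / (p%:R + 1) by rewrite divr_gt0 // ltr_pwDr.
  apply: filterS (uq _ e1) => k /= h; rewrite sub0r normrN ger0_norm ?enorm_ge0 //.
  apply: le_lt_trans (enorm_le_norm _) _.
  have := ler_wpM2l (ler0n _ p) (ltW h); move/le_lt_trans; apply.
  by rewrite mulrA ltr_pdivrMr ?ltr_pwDr // mulrDr mulr1 mulrC ltrDl.
apply: filterS (uq _ e0) => k /=; rewrite sub0r normrN ger0_norm ?enorm_ge0 //.
exact: le_lt_trans (norm_le_enorm _).
Qed.

End InnerProduct.

Lemma increasing_seq_ge (f : nat -> nat) : increasing_seq f -> forall j, (j <= f j)%N.
Proof.
move=> f_incr; elim=> [//|j IH]; apply: leq_ltn_trans IH _.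
by rewrite ltnNge -leEnat f_incr ltnn.
Qed.

Lemma infinite_range_increasing (f : nat -> nat) :
  increasing_seq f -> infinite_set (range f).
Proof.
move=> f_incr fin; apply: infinite_nat.
have := @finite_preimage _ _ (range f) f _ fin; rewrite preimage_range; apply.
by move=> a b _ _; exact: increasing_seq_injective.
Qed.

Section NonincreasingSubseq.
Variables (R : realType) (a : R^nat) (f : nat -> nat) (L : R).
Hypotheses (a_noninc : nonincreasing_seq a) (f_incr : increasing_seq f).
Hypothesis afL : a \o f @ \oo --> L.

Lemma nonincreasing_subseq_ge k : L <= a k.
Proof.
apply: (ler_cvg_to afL (cvg_cst (a k))); exists k => // j /= kj.
exact/a_noninc/(leq_trans kj (increasing_seq_ge f_incr j)).
Qed.

Lemma nonincreasing_subseq_cvg : a @ \oo --> L.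
Proof.
apply/cvgrPdist_lt => e e0; have [N _ aN] := (cvgrPdist_lt _ _).1 afL e e0.
exists (f N) => // k /= k_ge.
have := aN N (leqnn N); rewrite /= !ler0_norm ?subr_le0 ?nonincreasing_subseq_ge // !opprB.
by apply: le_lt_trans; rewrite lerD2r; exact: a_noninc.
Qed.

End NonincreasingSubseq.

Section Sequences.
Variables (R : realType) (n : nat).

Lemma cvg_along_subseq (u : nat -> 'rV[R]_n) (f : nat -> nat) (q : 'rV[R]_n) :
  increasing_seq f -> u \o f @ \oo --> q -> cvg_along u (range f) q.
Proof.
move=> f_incr /cvg_enormP/cvgrPdist_lt ufq e e0.
have [N _ uN] := ufq e e0; exists (f N) => _ [j _ <-] fj_ge.
have /uN : (N <= j)%N by rewrite -f_incr.
by rewrite /= sub0r normrN ger0_norm ?enorm_ge0 // -enormN opprB.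
Qed.

Lemma cvg_along_R_cvg (u : R^nat) (I : set nat) (a : R) :
  u @ \oo --> a -> cvg_along_R u I a.
Proof.
move=> /cvgrPdist_lt ua e /ua [N _ uN]; exists N => k _ /uN.
by rewrite distrC.
Qed.

Lemma bounded_seq_cluster (u : nat -> 'rV[R]_n) M : (forall k, `|u k| <= M) ->
  exists q, cluster (u @ \oo) q.
Proof.
move=> uM; set M' := `|M| + 1; have M'0 : 0 < M' by rewrite ltr_pwDr.
have in_ball k : closed_ball (0 : 'rV[R]_n) M' (u k).
  rewrite closed_ballE // /closed_ball_ /= sub0r normrN.
  by apply: le_trans (uM k) _; apply: le_trans (ler_norm _) _; rewrite lerDl.
have cB : compact (closed_ball (0 : 'rV[R]_n) M').
  apply: bounded_closed_compact; last exact: closed_ball_closed.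
  exists M'; split; first exact: num_real.
  move=> M'' hM z; rewrite closed_ballE // /closed_ball_ /= sub0r normrN => hz.
  by apply: ltW; apply: le_lt_trans hM.
have [|q [_ uq]] := cB (u @ \oo) _; first by exists 0%N => // k _; exact: in_ball.
by exists q.
Qed.

Lemma cluster_subseq_cvg (u : nat -> 'rV[R]_n) (q : 'rV[R]_n) : cluster (u @ \oo) q ->
  exists2 f, increasing_seq f & u \o f @ \oo --> q.
Proof.
move=> uq; have : cluster ((fun k => `|q - u k|) @ \oo) 0.
  apply/cluster_eventuallyP => e N e0.
  have tail : (u @ \oo) (u @` [set j | (N <= j)%N]) by exists N => // k k_ge; exists k.
  have [_ [[j j_ge <-] uj]] := uq _ _ tail (nbhsx_ballx q e e0).
  by exists j => //; rewrite sub0r normrN normr_id; move: uj; rewrite mx_norm_ball => /ltW.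
move=> /cluster_eventually_cvg [f f_incr /cvgrPdist_lt uf0]; exists f => //.
apply/cvgrPdist_lt => e /uf0; apply: filterS => j.
by rewrite /= sub0r normrN normr_id.
Qed.

End Sequences.

Section SupportFunction.
Variables (R : realType) (m : nat) (C : set 'rV[R]_m).
Hypotheses (C_compact : compact C) (C_neq0 : C !=set0).

Lemma dotv_argmax y : exists2 c, C c & forall c', C c' -> dotv c' y <= dotv c y.
Proof.
have [|c] := @EVT_max_rV R m (dotv y) C C_neq0 C_compact.
  exact/continuous_subspaceT/continuous_dotv.
by rewrite inE => Cc cmax; exists c => // c' Cc'; rewrite !(dotvC _ y) cmax ?inE.
Qed.

Lemma dotv_le_phiC c y : C c -> dotv c y <= phiC C y.
Proof.
move=> Cc; have [c1 _ c1max] := dotv_argmax y.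
apply: ub_le_sup; last by exists c.
by exists (dotv c1 y) => _ [c' Cc' <-]; exact: c1max.
Qed.

Lemma phiC_le y b : (forall c, C c -> dotv c y <= b) -> phiC C y <= b.
Proof.
move=> yb; have [c0 Cc0] := C_neq0.
by apply: ge_sup => [|_ [c Cc <-]]; [exists (dotv c0 y), c0 | exact: yb].
Qed.

Lemma phiC_attained y : exists2 c, C c & phiC C y = dotv c y.
Proof.
have [c Cc cmax] := dotv_argmax y; exists c => //.
by apply/eqP; rewrite eq_le dotv_le_phiC // andbT; exact: phiC_le.
Qed.

Lemma le_phiC y z : (forall c, C c -> dotv c y <= dotv c z) -> phiC C y <= phiC C z.
Proof. by move=> yz; apply: phiC_le => c Cc; apply: le_trans (yz c Cc) (dotv_le_phiC _ Cc). Qed.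

Lemma phiCD_le y z : phiC C (y + z) <= phiC C y + phiC C z.
Proof. by apply: phiC_le => c Cc; rewrite dotvDr lerD // dotv_le_phiC. Qed.

Lemma phiCZ_le t y : 0 <= t -> phiC C (t *: y) <= t * phiC C y.
Proof. by move=> t0; apply: phiC_le => c Cc; rewrite dotvZr ler_wpM2l // dotv_le_phiC. Qed.

Lemma phiC0 : phiC C 0 = 0.
Proof.
apply/eqP; rewrite eq_le; apply/andP; split.
  by apply: phiC_le => c _; rewrite dotv0r.
by have [c Cc] := C_neq0; rewrite -(dotv0r c) dotv_le_phiC.
Qed.

Lemma inf_dotv_le c y : C c -> inf [set dotv c' y | c' in C] <= dotv c y.
Proof.
move=> Cc; apply: ge_inf; last by exists c.
exists (- phiC C (- y)) => _ [c' Cc' <-].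
by rewrite lerNl -dotvNr; exact: dotv_le_phiC.
Qed.

End SupportFunction.


Section DualCone.
Variables (R : realType) (m : nat) (K C : set 'rV[R]_m).
Hypotheses (K_proper : proper_cone K) (C_compact : compact C) (C_n0 : ~ C 0).
Hypothesis C_generates : cone_of C = dual_cone K.

Let K_closed : closed K. Proof. by case: K_proper. Qed.
Let K0 : K 0. Proof. by case: K_proper => _ []. Qed.
Let KZ y t : K y -> 0 <= t -> K (t *: y).
Proof. by case: K_proper => _ [_ [KZ _]]; exact: KZ. Qed.
Let KD y z : K y -> K z -> K (y + z).
Proof. by case: K_proper => _ [_ [_ [KD _]]]; exact: KD. Qed.

Lemma C_neq0 : C !=set0.
Proof.
have : dual_cone K 0 by move=> y _; rewrite dotvC dotv0r.
by rewrite -C_generates => -[_ [_ [c Cc _]]]; exists c.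
Qed.

Let C_nonempty : C !=set0 := C_neq0.

Lemma dotv_ge0_C c y : C c -> K y -> 0 <= dotv c y.
Proof.
move=> Cc; have : cone_of C c by exists 1; split => //; exists c; rewrite ?scale1r.
by rewrite C_generates; apply.
Qed.

Lemma leK_dotv y z : leK K y z -> forall c, C c -> dotv c y <= dotv c z.
Proof. by move=> yz c Cc; rewrite -subr_ge0 -dotvBr; exact: dotv_ge0_C. Qed.

Lemma phiC_ge0 y : K y -> 0 <= phiC C y.
Proof.
have [c Cc] := C_neq0 => Ky.
by apply: le_trans (dotv_le_phiC C_compact C_neq0 _ Cc); exact: dotv_ge0_C.
Qed.

Lemma cone_projection_normal y q : K q ->
    (forall w, K w -> dotv (y - q) (y - q) <= dotv (y - w) (y - w)) ->
  (forall w, K w -> dotv (y - q) w <= 0) /\ 0 <= dotv (y - q) q.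
Proof.
set a := y - q => Kq qmin; split => [w Kw|].
  apply: (@le0_small_mul _ _ (dotv w w)) => t t0 t1.
  have := qmin (q + t *: w) (KD Kq (KZ Kw (ltW t0))).
  rewrite (_ : y - (q + t *: w) = a + (- t) *: w); last by rewrite /a scaleNr opprD addrA.
  rewrite dotvv_addZ => h.
  have : 0 <= t * (t * dotv w w - 2 * dotv a w) by nra.
  by rewrite pmulr_rge0 // subr_ge0 => h2; have := dotvv_ge0 w; nra.
rewrite -oppr_le0; apply: (@le0_small_mul _ _ (dotv q q)) => t t0 t1.
have := qmin ((1 - t) *: q) (KZ Kq _); rewrite subr_ge0 => /(_ t1).
rewrite (_ : y - (1 - t) *: q = a + t *: q); last first.
  by rewrite /a scalerBl scale1r opprB addrCA addrC.
rewrite dotvv_addZ => h.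
have : 0 <= t * (t * dotv q q + 2 * dotv a q) by nra.
by rewrite pmulr_rge0 // => h2; have := dotvv_ge0 q; nra.
Qed.

(* With q the projection of y onto K, -(y - q) lies in the dual of K, hence in
   the cone of C; testing it against y forces y = q. *)
Lemma bipolar y : (forall c, C c -> 0 <= dotv c y) -> K y.
Proof.
move=> yC; have [q Kq qmin] := nearest_point y K_closed K0.
have [normal qpos] := cone_projection_normal Kq qmin.
set a := y - q in normal qpos.
have : dual_cone K (- a) by move=> w Kw; rewrite dotvNl oppr_ge0; exact: normal.
rewrite -C_generates => -[s [s0 [c Cc ec]]].
have ya : dotv a y = dotv a a + dotv a q by rewrite -dotvDr /a subrK.
have : 0 <= dotv (- a) y by rewrite ec dotvZl mulr_ge0 // yC.
rewrite dotvNl ya => h; have a0 : dotv a a = 0.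
  by apply/eqP; rewrite eq_le dotvv_ge0 andbT; nra.
by move: Kq; rewrite -(subrK q y) -/a (dotvv_eq0 a0) add0r.
Qed.

Lemma interior_coneD y z : interior K y -> K z -> interior K (y + z).
Proof.
move=> /nbhs_ballP [e e0 yball] Kz; apply/nbhs_ballP; exists e => // w.
rewrite mx_norm_ball => hw; rewrite -(subrK z w); apply: KD => //.
by apply: yball; rewrite mx_norm_ball /ball_ /= opprB addrA.
Qed.

Lemma dotv_interior_gt0 v c : interior K v -> C c -> 0 < dotv c v.
Proof.
move=> /nbhs_ballP [e e0 vball] Cc.
have cc : 0 < dotv c c.
  rewrite lt_neqAle dotvv_ge0 andbT eq_sym; apply/eqP => /dotvv_eq0 c0.
  by apply: C_n0; rewrite -c0.
set d := e / (2 * (`|c| + 1)).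
have d0 : 0 < d by rewrite divr_gt0 // mulr_gt0 // ltr_pwDr.
have : K (v - d *: c).
  apply: vball; rewrite mx_norm_ball /ball_ /= opprB addrC subrK normrZ gtr0_norm //.
  rewrite /d mulrAC ltr_pdivrMr ?mulr_gt0 ?ltr_pwDr //.
  by rewrite ltr_pM2l //; have := normr_ge0 c; lra.
move=> /(dotv_ge0_C Cc); rewrite dotvBr dotvZr subr_ge0.
by apply: lt_le_trans; rewrite mulr_gt0.
Qed.

Lemma K_stationary_weakly_efficient n (F : 'rV[R]_n -> 'rV[R]_m) q :
  K_convex K F -> K_stationary K F q -> weakly_efficient K F q.
Proof.
move=> Fconv Fstat [z Fzq]; apply: (Fstat (z - q)).
rewrite (_ : - _ = (F q - F z) + (F z - F q - 'd F q (z - q))).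
  exact: interior_coneD Fzq (Fconv q z).
by rewrite addrA addrA subrK subrr add0r.
Qed.

Section Descent.
Variables (l mu : 'rV[R]_m).
Hypotheses (l_K : K l) (mu_int : interior K mu) (l_le_mu : leK K l mu).

Let mu_K : K mu := interior_subset mu_int.

Lemma phiC_gap (a b : R) : 0 <= a -> 0 <= b -> 0 <= phiC C (a *: l - b *: mu) ->
  b <= a /\ phiC C (a *: l - b *: mu) <= (a - b) * phiC C l.
Proof.
move=> a0 b0; have [c Cc phiE] := phiC_attained C_compact C_neq0 (a *: l - b *: mu).
move=> h; rewrite phiE dotvBr !dotvZr in h.
have cl := leK_dotv l_le_mu Cc.
have cl0 := dotv_ge0_C Cc l_K.
have cmu := dotv_interior_gt0 mu_int Cc.
have ba : b <= a by rewrite -(ler_pM2r cmu); nra.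
split => //.
have le_l : phiC C (a *: l - b *: mu) <= phiC C ((a - b) *: l).
  apply: le_phiC => // c' Cc'; rewrite dotvBr !dotvZr.
  have := leK_dotv l_le_mu Cc'; have := dotv_ge0_C Cc' l_K.
  nra.
by apply: le_trans le_l _; apply: phiCZ_le; rewrite ?subr_ge0.
Qed.

Section StronglyConvex.
Variables (n : nat) (G : 'rV[R]_n -> 'rV[R]_m).
Hypothesis G_sconv : strongly_K_convex K G mu.

Lemma strongly_K_convex_segment xn z t c : C c -> 0 <= t <= 1 ->
  dotv c (G (xn + t *: (z - xn))) <= (1 - t) * dotv c (G xn) + t * dotv c (G z)
    - 2^-1 * t * (1 - t) * enorm (z - xn) ^+ 2 * dotv c mu.
Proof.
move=> Cc /andP [t0 t1]; set w := xn + t *: (z - xn).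
have e1 : xn - w = (- t) *: (z - xn) by rewrite /w opprD addrA subrr add0r scaleNr.
have e2 : z - w = (1 - t) *: (z - xn) by rewrite /w opprD addrA scalerBl scale1r.
have S1 := leK_dotv (G_sconv w xn) Cc.
have S2 := leK_dotv (G_sconv w z) Cc.
rewrite e1 in S1; rewrite e2 in S2.
rewrite !sqr_enormZ !linearZZ !dotvDr !dotvZr !dotvNr in S1 S2.
have t1' : 0 <= 1 - t by rewrite subr_ge0.
have := ler_wpM2l t1' S1; have := ler_wpM2l t0 S2.
have := dotv_ge0_C Cc mu_K.
nra.
Qed.

(* Compare xn with the points xn + t (z - xn) and let t go to 0. *)
Lemma argmin_strongly_K_convex xn z : is_argmin_phi C G xn ->
  phiC C (G xn) <= phiC C (G z - (2^-1 * enorm (z - xn) ^+ 2) *: mu).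
Proof.
move=> xn_min; set E := enorm (z - xn) ^+ 2.
have E0 : 0 <= E by exact: sqr_ge0.
rewrite -subr_le0; apply: (@le0_small_mul _ _ (2^-1 * E * phiC C mu)) => t t0 t1.
have t01 : 0 <= t <= 1 by rewrite (ltW t0).
set P := phiC C (G z - (2^-1 * (1 - t) * E) *: mu).
have step : phiC C (G xn) <= (1 - t) * phiC C (G xn) + t * P.
  apply: le_trans (xn_min (xn + t *: (z - xn))) _; apply: phiC_le => // c Cc.
  apply: le_trans (@strongly_K_convex_segment xn z t c Cc t01) _.
  have := dotv_le_phiC C_compact C_neq0 (G xn) Cc.
  have := dotv_le_phiC C_compact C_neq0 (G z - (2^-1 * (1 - t) * E) *: mu) Cc.
  rewrite dotvBr dotvZr; have : 0 <= 1 - t by rewrite subr_ge0.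
  rewrite -/E -/P; nra.
have relax : P <= phiC C (G z - (2^-1 * E) *: mu) + t * (2^-1 * E * phiC C mu).
  rewrite /P (_ : _ - _ = G z - (2^-1 * E) *: mu + (t * (2^-1 * E)) *: mu); last first.
    rewrite (_ : 2^-1 * (1 - t) * E = 2^-1 * E - t * (2^-1 * E)); last by ring.
    by rewrite scalerBl opprB addrA addrAC.
  apply: le_trans (phiCD_le C_compact C_neq0 _ _) _.
  rewrite lerD2l (mulrA t (2^-1 * E) (phiC C mu)); apply: phiCZ_le => //.
  by apply: mulr_ge0; [exact: ltW | rewrite mulr_ge0 ?invr_ge0].
nra.
Qed.

End StronglyConvex.

Section SurrogateStep.
Variables (n : nat) (F G : 'rV[R]_n -> 'rV[R]_m) (xk xn : 'rV[R]_n).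
Hypotheses (G_surr : surrogate K C l mu F xk G) (xn_min : is_argmin_phi C G xn).

Lemma surrogate_center : G xk = 0.
Proof. by have [_ [_ [_ [_ [H0 _]]]]] := G_surr; move: H0; rewrite subrK. Qed.

Lemma phiC_surrogate_le0 : phiC C (G xn) <= 0.
Proof. by have := xn_min xk; rewrite surrogate_center phiC0. Qed.

Lemma surrogate_decrease c : C c -> dotv c (F xn - F xk) <= phiC C (G xn).
Proof.
move=> Cc; have [_ [_ [G_maj _]]] := G_surr.
apply: le_trans (leK_dotv (G_maj _ xn_min) Cc) _.
exact: dotv_le_phiC.
Qed.

Lemma surrogate_descent c : C c -> dotv c (F xn) <= dotv c (F xk).
Proof.
move=> Cc; rewrite -subr_le0 -dotvBr.
exact: le_trans (surrogate_decrease Cc) phiC_surrogate_le0.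
Qed.

(* [G - F + F xk] is K-smooth and vanishes to first order at [xk]. *)
Lemma dotv_surrogate_le z c : C c ->
  dotv c (G z) <= dotv c (F z - F xk) + 2^-1 * enorm (z - xk) ^+ 2 * dotv c l.
Proof.
move=> Cc; have [_ [_ [_ [H_smooth [H0 dH0]]]]] := G_surr.
have := leK_dotv (H_smooth xk z) Cc; rewrite /= dH0 H0 subr0 add0r.
by rewrite !dotvZr !dotvDr !dotvNr; lra.
Qed.

Lemma surrogate_three_point z : phiC C (F xn - F xk) <=
  phiC C (F z - F xk + (2^-1 * enorm (z - xk) ^+ 2) *: l
          - (2^-1 * enorm (z - xn) ^+ 2) *: mu).
Proof.
have [_ [G_sconv _]] := G_surr.
have dec : phiC C (F xn - F xk) <= phiC C (G xn).
  by apply: phiC_le => // c; exact: surrogate_decrease.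
apply: le_trans dec _; apply: le_trans (argmin_strongly_K_convex G_sconv z xn_min) _.
apply: le_phiC => // c Cc; rewrite !dotvBr dotvDr !dotvZr.
by have := dotv_surrogate_le z Cc; rewrite dotvBr; lra.
Qed.

Lemma fejer_step z s : 0 <= s -> (forall c, C c -> s <= dotv c (F xn - F z)) ->
  enorm (z - xn) <= enorm (z - xk) /\
  s <= (2^-1 * enorm (z - xk) ^+ 2 - 2^-1 * enorm (z - xn) ^+ 2) * phiC C l.
Proof.
move=> s0 s_le; set a := 2^-1 * enorm (z - xk) ^+ 2; set b := 2^-1 * enorm (z - xn) ^+ 2.
have a0 : 0 <= a by rewrite mulr_ge0 ?invr_ge0 ?sqr_ge0.
have b0 : 0 <= b by rewrite mulr_ge0 ?invr_ge0 ?sqr_ge0.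
have s_gap : s <= phiC C (a *: l - b *: mu).
  have := phiCD_le C_compact C_neq0 (F z - F xk) (a *: l - b *: mu).
  rewrite addrA; move/(le_trans (surrogate_three_point z)).
  have : phiC C (F z - F xk) <= phiC C (F xn - F xk) - s.
    apply: phiC_le => // c Cc.
    have := dotv_le_phiC C_compact C_neq0 (F xn - F xk) Cc; have := s_le c Cc.
    by rewrite !dotvBr; lra.
  lra.
have [ba gap] := phiC_gap a0 b0 (le_trans s0 s_gap); split; last exact: le_trans gap.
by rewrite -(ler_pXn2r (n:=2)) ?nnegrE ?enorm_ge0 //; move: ba; rewrite /a /b; lra.
Qed.

End SurrogateStep.

Section Algorithm.
Variables (n : nat) (F : 'rV[R]_n -> 'rV[R]_m) (x : nat -> 'rV[R]_n)
  (G : nat -> 'rV[R]_n -> 'rV[R]_m).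
Hypotheses (G_surr : forall k, surrogate K C l mu F (x k) (G k))
  (x_min : forall k, is_argmin_phi C (G k) (x k.+1)).

Lemma dotvF_nonincreasing c : C c -> nonincreasing_seq (fun k => dotv c (F (x k))).
Proof.
by move=> Cc; apply/nonincreasing_seqP => k; exact: surrogate_descent (G_surr k) (x_min k) _ Cc.
Qed.

Lemma x_in_level k : level_set K F (x 0) (x k).
Proof.
apply: bipolar => c Cc; rewrite dotvBr subr_ge0.
exact: dotvF_nonincreasing Cc _ _ (leq0n k).
Qed.

Lemma telescoped_rate k z s : 0 <= s ->
    (forall j, (j < k)%N -> forall c, C c -> s <= dotv c (F (x j.+1) - F z)) ->
  k%:R * s <= (2^-1 * enorm (z - x 0) ^+ 2 - 2^-1 * enorm (z - x k) ^+ 2) * phiC C l.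
Proof.
move=> s0; elim: k => [|k IH] s_le; first by rewrite mul0r subrr mul0r.
have [_ step] := fejer_step (G_surr k) (x_min k) s0 (s_le k (ltnSn k)).
have := IH (fun j jk => s_le j (ltnW jk)).
rewrite -(@natr1 R k); lra.
Qed.

Section BoundedLevelSet.
Hypothesis level_bounded : ebounded (level_set K F (x 0)).

Lemma diam_level_ub a b : level_set K F (x 0) a -> level_set K F (x 0) b ->
  enorm (a - b) <= diam_level K F (x 0).
Proof.
move=> La Lb; apply: ub_le_sup; last by exists a => //; exists b.
have [M LM] := level_bounded.
exists (n%:R * (M + M)) => _ [a' La' [b' Lb' <-]].
apply: le_trans (enorm_le_norm _) _; rewrite ler_wpM2l //.
apply: le_trans (ler_normB _ _) _.
by apply: lerD; apply: le_trans (norm_le_enorm _) _; exact: LM.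
Qed.

Lemma u0_rate k : (1 <= k)%N ->
  (u0 C F (x k) <= ((phiC C l * diam_level K F (x 0) ^+ 2) / (2 * k%:R))%:E)%E.
Proof.
move=> k1; apply: ge_ereal_sup => _ [z _ <-]; rewrite lee_fin.
set s := inf _; set D := diam_level K F (x 0).
have k0 : 0 < k%:R :> R by rewrite ltr0n.
have pl0 : 0 <= phiC C l by exact: phiC_ge0.
have [s0|s_gt0] := lerP s 0.
  apply: le_trans s0 _; apply: divr_ge0; first by rewrite mulr_ge0 ?sqr_ge0.
  by rewrite mulr_ge0 // ltW.
have s_le j : (j <= k)%N -> forall c, C c -> s <= dotv c (F (x j) - F z).
  move=> jk c Cc; apply: le_trans (inf_dotv_le C_compact C_neq0 _ Cc) _.
  by rewrite !dotvBr lerD2r; exact: dotvF_nonincreasing.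
have Lz : level_set K F (x 0) z.
  apply: bipolar => c Cc; apply: le_trans (ltW s_gt0) _; exact: s_le.
have rate := telescoped_rate (ltW s_gt0) (fun j jk => s_le j.+1 jk).
have zD : enorm (z - x 0) ^+ 2 <= D ^+ 2.
  have zD1 := diam_level_ub Lz (x_in_level 0).
  by rewrite lerXn2r ?nnegrE ?enorm_ge0 ?(le_trans (enorm_ge0 _) zD1).
rewrite ler_pdivlMr ?mulr_gt0 //.
have := sqr_ge0 (enorm (z - x k)); nra.
Qed.

Section Convergence.
Hypothesis F_diff : forall z, differentiable F z.
Hypothesis F_conv : K_convex K F.
Hypothesis stationary_limits : forall (I : set nat) xs,
  infinite_set I -> cvg_along x I xs ->
  cvg_along_R (fun k => phiC C (G k (x k.+1))) I 0 -> K_stationary K F xs.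

Lemma algorithm_cvg : exists xs, x @ \oo --> xs /\ weakly_efficient K F xs.
Proof.
have [M LM] := level_bounded.
have /bounded_seq_cluster [q] : forall k, `|x k| <= M.
  by move=> k; apply: le_trans (norm_le_enorm _) (LM _ (x_in_level k)).
move=> /cluster_subseq_cvg [f f_incr xfq].
have Fxf c : C c -> (fun j => dotv c (F (x (f j)))) @ \oo --> dotv c (F q).
  move=> Cc; have Fc : {for q, continuous (fun y => dotv c (F y))}.
    apply: (@continuous_comp _ _ _ F (dotv c)); last exact: continuous_dotv.
    exact: differentiable_continuous.
  exact: cvg_comp _ _ xfq Fc.
have Fx c : C c -> (fun k => dotv c (F (x k))) @ \oo --> dotv c (F q).
  by move=> Cc; exact: nonincreasing_subseq_cvg (dotvF_nonincreasing Cc) f_incr (Fxf c Cc).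
have q_stat : K_stationary K F q.
  apply: stationary_limits (infinite_range_increasing f_incr) (cvg_along_subseq f_incr xfq) _.
  apply: cvg_along_R_cvg; have [c0 Cc0] := C_neq0.
  apply: (@squeeze_cvgr _ _ _ _ (fun k => dotv c0 (F (x k.+1) - F (x k))) (cst 0)).
  - exists 0%N => // k _ /=; apply/andP; split.
      exact: surrogate_decrease (G_surr k) (x_min k) _ Cc0.
    exact: phiC_surrogate_le0 (G_surr k) (x_min k).
  - rewrite -(subrr (dotv c0 (F q))); under eq_fun do rewrite dotvBr.
    by apply: cvgB; [rewrite (cvg_shiftS (fun k => dotv c0 (F (x k)))) |]; exact: Fx.
  - exact: cvg_cst.
have fejer : nonincreasing_seq (fun k => enorm (q - x k)).
  apply/nonincreasing_seqP => k.
  have Fq_le c : C c -> 0 <= dotv c (F (x k.+1) - F q).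
    move=> Cc; rewrite dotvBr subr_ge0.
    exact: nonincreasing_subseq_ge (dotvF_nonincreasing Cc) f_incr (Fxf c Cc) _.
  by have [] := fejer_step (G_surr k) (x_min k) (lexx 0) Fq_le.
exists q; split; last exact: K_stationary_weakly_efficient F_conv q_stat.
apply/cvg_enormP; apply: nonincreasing_subseq_cvg fejer f_incr _.
exact: (cvg_enormP _ _).1 xfq.
Qed.

End Convergence.
End BoundedLevelSet.
End Algorithm.

End Descent.
End DualCone.

Theorem theorem2 (R : realType) (n m : nat)
    (K C : set 'rV[R]_m) (F : 'rV[R]_n -> 'rV[R]_m) (l mu : 'rV[R]_m)
    (x : nat -> 'rV[R]_n) (G : nat -> 'rV[R]_n -> 'rV[R]_m) :
  proper_cone K ->
  compact C -> convexS C -> ~ C 0 -> cone_of C = dual_cone K ->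
  (forall z, differentiable F z) ->
  K l -> interior K mu -> leK K l mu ->
  assumptionA K C l mu F (x 0%N) ->
  K_convex K F ->
  (forall k, surrogate K C l mu F (x k) (G k)) ->
  (forall k, is_argmin_phi C (G k) (x k.+1)) ->
  (forall k, x k.+1 <> x k) ->
  (exists xs, x @ \oo --> xs /\ weakly_efficient K F xs) /\
  (forall k : nat, (1 <= k)%N ->
     (u0 C F (x k) <=
      ((phiC C l * diam_level K F (x 0%N) ^+ 2) / (2 * k%:R))%:E)%E).
Proof.
(* Neither the convexity of C nor x (k.+1) <> x k is needed. *)
move=> K_proper C_compact _ C_n0 C_generates F_diff l_K mu_int l_le_mu
  [level_bounded stationary_limits] F_conv G_surr x_min _.
split.
  apply: (algorithm_cvg K_proper C_compact C_n0 C_generates l_K mu_int l_le_mu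
    G_surr x_min level_bounded F_diff F_conv) => I xs.
  exact: stationary_limits.
exact: (u0_rate K_proper C_compact C_n0 C_generates l_K mu_int l_le_mu
  G_surr x_min level_bounded).
Qed.
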